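(* Let $G=A_n$ be the alternating group with $n\ge 5$. Then $\kappa(G)=2$.
   Context: The commutator is $[x,y]=xyx^{-1}y^{-1}$. For a finite group $G$ with solvable radical $R(G)$ and $g\in G\setminus R(G)$, $\kappa(g)$ is the smallest $n$ such that there exist $x_1,\dots,x_n\in G$ with $\langle [g,x_1],\dots,[g,x_n]\rangle$ not solvable, and $\kappa(G)=\max_{g\in G\setminus R(G)}\kappa(g)$ (the radical degree of $G$). *)

From mathcomp Require Import all_boot all_fingroup all_solvable.
Set Implicit Arguments. Unset Strict Implicit. Unset Printing Implicit Defensive.
Local Open Scope group_scope.

(* Commutator with the paper's convention [x,y] = x y x^-1 y^-1
   (MathComp's [~ x, y] is x^-1 y^-1 x y, so we define our own). *)
Definition pcomm (gT : finGroupType) (x y : gT) : gT := x * y * x^-1 * y^-1.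

Definition solv_radical (gT : finGroupType) (G : {set gT}) : {set gT} :=
  << \bigcup_(H : {group gT} | (H <| G) && solvable H) H >>.

Definition kgood (gT : finGroupType) (G : {set gT}) (g : gT) (n : nat) : bool :=
  [exists t : n.-tuple gT,
     all (fun x => x \in G) t &&
     ~~ solvable << [set pcomm g (tnth t i) | i : 'I_n] >>].

Definition is_kappa_elt (gT : finGroupType) (G : {set gT}) (g : gT) (n : nat) : Prop :=
  kgood G g n /\ (forall m, m < n -> ~~ kgood G g m).

Definition is_radical_degree (gT : finGroupType) (G : {set gT}) (k : nat) : Prop :=
  (forall g, g \in G :\: solv_radical G -> exists2 n, is_kappa_elt G g n & n <= k) /\
  (exists2 g, g \in G :\: solv_radical G & is_kappa_elt G g k).

From mathcomp Require Import all_boot all_fingroup all_solvable.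
Set Implicit Arguments. Unset Strict Implicit. Unset Printing Implicit Defensive.
Local Open Scope group_scope.

(* With phi = g^-1 the commutator [g, x] equals x ^ phi * x^-1, so it suffices
   to find x1, x2 in A_n for which these two elements generate a nontrivial
   perfect group.  When x1, x2 are supported on a few points, the commutators
   only depend on the values of phi there.  Walking along the cycles of phi, one
   always meets one of four small configurations (on five or eight points) and
   for each of them suitable x1, x2 are fixed once and for all; perfectness is
   certified by writing each generator as a commutator of words in the two, a
   finite check done by computation.  Evenness of g excludes phi = (a b) and,
   for n = 6, phi = (a b)(d e)(h k).  Finally A_n is simple and not solvable,
   so R(A_n) = 1, and one commutator generates a cyclic group. *)

Lemma gen_commutators_not_solvable (gT : finGroupType) (u v a b c d : gT) :
  u != 1 -> {subset [:: a; b; c; d] <= <<[set u; v]>>} ->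
  u = [~ a, b] -> v = [~ c, d] -> ~~ solvable <<[set u; v]>>.
Proof.
set K := <<_>> => ntu sK Du Dv; apply/negP => solK.
have Ku : u \in K by rewrite mem_gen // !inE eqxx.
have ntK : K :!=: 1 by apply/trivgPn; exists u.
have sK_K' : K \subset K^`(1).
  rewrite derg1 gen_subG; apply/subsetP => x; rewrite !inE => /orP[]/eqP->.
    by rewrite Du mem_commg // sK // !inE eqxx ?orbT.
  by rewrite Dv mem_commg // sK // !inE eqxx ?orbT.
by have := sol_der1_proper solK (subxx K) ntK; rewrite properE sK_K' andbF.
Qed.

Lemma kgood_lt2 (gT : finGroupType) (G : {set gT}) (g : gT) (m : nat) :
  m < 2 -> ~~ kgood G g m.
Proof.
case: m => [|[|//]] _; apply/existsP => -[t /andP[_]]; apply/negP; rewrite negbK.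
  rewrite (_ : [set _ | i : 'I_0] = set0) ?gen0 ?solvable1 //.
  by apply/setP => x; rewrite inE; apply/imsetP => -[[]].
rewrite (_ : [set _ | i : 'I_1] = [set pcomm g (tnth t ord0)]).
  exact: abelian_sol (cycle_abelian _).
by apply/setP => x; rewrite inE; apply/imsetP/eqP => [[i _ ->]|->];
  [rewrite (ord1 i) | exists ord0].
Qed.

Lemma kgood2 (gT : finGroupType) (G : {set gT}) (g x1 x2 : gT) :
  x1 \in G -> x2 \in G -> ~~ solvable <<[set pcomm g x1; pcomm g x2]>> ->
  kgood G g 2.
Proof.
move=> Gx1 Gx2 nsol; apply/existsP; exists [tuple x1; x2]; rewrite /= Gx1 Gx2 /=.
congr (~~ solvable <<_>>): nsol; apply/setP => y; rewrite !inE.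
apply/orP/imsetP => [[]/eqP->|[i _ ->]]; first by exists ord0.
  by exists (lift ord0 ord0).
by case: i => -[|[|//]] ?; [left | right]; rewrite (tnth_nth x1).
Qed.

Lemma kgood_not_solvable (gT : finGroupType) (G : {group gT}) (g : gT) (m : nat) :
  g \in G -> kgood G g m -> ~~ solvable G.
Proof.
move=> Gg /existsP[t /andP[/allP Gt]]; apply: contra => solG.
apply: solvableS solG; rewrite gen_subG; apply/subsetP => _ /imsetP[i _ ->].
by rewrite /pcomm !groupM ?groupV // Gt ?mem_tnth.
Qed.

Lemma solv_radical_simple (gT : finGroupType) (G : {group gT}) :
  simple G -> ~~ solvable G -> solv_radical G = 1.
Proof.
case/simpleP=> _ simG nsolG; apply/eqP; rewrite eqEsubset sub1G andbT gen_subG.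
apply/bigcupsP => H /andP[nHG solH].
have [-> | defH] := simG H nHG; first exact: sub1G.
by move: nsolG; rewrite -defH solH.
Qed.

(* A word [w : seq (nat * nat)] of index pairs encodes the product, from left to
   right, of the transpositions of the labelled points [nth x0 s i] and
   [nth x0 s j] (see [tword_perm] below); [tword_eval w] is its action on labels,
   which makes equality of such products decidable by computation. *)
Definition swap_index (ij : nat * nat) (k : nat) : nat :=
  if k == ij.1 then ij.2 else if k == ij.2 then ij.1 else k.

Definition tword_eval (w : seq (nat * nat)) (k : nat) : nat :=
  foldl (fun k ij => swap_index ij k) k w.

Definition tword_on (m : nat) (w : seq (nat * nat)) : bool :=
  all (fun ij => (ij.1 < m) && (ij.2 < m)) w.

Definition tword_eq (m : nat) (w1 w2 : seq (nat * nat)) : bool :=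
  all (fun k => tword_eval w1 k == tword_eval w2 k) (iota 0 m).

(* [phil] lists pairs [(i, j)] of labels with [phi (nth x0 s i) = nth x0 s j]. *)
Fixpoint relabel (phil : seq (nat * nat)) (i : nat) : nat :=
  if phil is (j, k) :: phil' then if i == j then k else relabel phil' i else i.

Definition relabel_tword (phil : seq (nat * nat)) (w : seq (nat * nat)) :=
  [seq (relabel phil ij.1, relabel phil ij.2) | ij <- w].

Definition comm_tword (a b : seq (nat * nat)) := rev a ++ rev b ++ a ++ b.

(* Letters 0, 1, 2, 3 stand for u, v, u^-1 and v^-1. *)
Definition letters_tword (wu wv : seq (nat * nat)) (l : seq nat) :=
  flatten [seq nth [::] [:: wu; wv; rev wu; rev wv] c | c <- l].

Definition perfect_certificate (m : nat) (wu wv : seq (nat * nat))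
    (A1 B1 A2 B2 : seq nat) : bool :=
  let word := letters_tword wu wv in
  [&& tword_on m wu, tword_on m wv, all (fun c => c < 4) (A1 ++ B1 ++ A2 ++ B2),
      ~~ tword_eq m wu [::],
      tword_eq m wu (comm_tword (word A1) (word B1)) &
      tword_eq m wv (comm_tword (word A2) (word B2))].

Definition even_tword_on (m : nat) (phil w : seq (nat * nat)) : bool :=
  [&& tword_on m w, ~~ odd (size w), all (fun ij => ij.1 != ij.2) w &
      all (fun ij => (ij.1 \in unzip1 phil) && (ij.2 \in unzip1 phil)) w].

(* If [w] encodes x and [phil] describes phi, this encodes x ^ phi * x^-1,
   which is [pcomm phi^-1 x]. *)
Definition commutator_tword (phil w : seq (nat * nat)) := relabel_tword phil w ++ rev w.

Definition witness (m : nat) (phil wx1 wx2 : seq (nat * nat)) (A1 B1 A2 B2 : seq nat) :=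
  [&& even_tword_on m phil wx1, even_tword_on m phil wx2 &
      perfect_certificate m (commutator_tword phil wx1) (commutator_tword phil wx2)
        A1 B1 A2 B2].

Lemma tword_on_cat m w1 w2 : tword_on m (w1 ++ w2) = tword_on m w1 && tword_on m w2.
Proof. exact: all_cat. Qed.

Lemma tword_on_rev m w : tword_on m (rev w) = tword_on m w.
Proof. exact: all_rev. Qed.

Lemma tword_eval_on m w k : tword_on m w -> k < m -> tword_eval w k < m.
Proof.
elim: w k => [|[i j] w IHw] k //= /andP[/andP[im jm] wm] km; apply: IHw => //.
by rewrite /swap_index /=; case: eqP => // _; case: eqP.
Qed.

Section TranspositionWords.
Variables (T : finType) (x0 : T) (s : seq T).
Hypothesis s_uniq : uniq s.
Local Notation lab i := (nth x0 s i).
Local Notation m := (size s).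

Definition tword_perm (w : seq (nat * nat)) : {perm T} :=
  \prod_(ij <- w) tperm (lab ij.1) (lab ij.2).

Lemma tword_perm_cat w1 w2 : tword_perm (w1 ++ w2) = tword_perm w1 * tword_perm w2.
Proof. exact: big_cat. Qed.

Lemma tword_permV w : (tword_perm w)^-1 = tword_perm (rev w).
Proof.
elim: w => [|ij w IHw]; first by rewrite /tword_perm big_nil invg1.
rewrite rev_cons -cats1 tword_perm_cat -IHw -(cat1s ij) tword_perm_cat invMg.
by rewrite /tword_perm !big_seq1 tpermV.
Qed.

Lemma tword_permR a b : [~ tword_perm a, tword_perm b] = tword_perm (comm_tword a b).
Proof. by rewrite !tword_perm_cat -!tword_permV /commg /conjg !mulgA. Qed.

Lemma tword_perm_lab w k :
  tword_on m w -> k < m -> tword_perm w (lab k) = lab (tword_eval w k).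
Proof.
elim: w k => [|[i j] w IHw] k /=; first by rewrite /tword_perm big_nil perm1.
case/andP=> /andP[im jm] wm km; rewrite /tword_perm big_cons permM -/(tword_perm w).
suff ->: tperm (lab i) (lab j) (lab k) = lab (swap_index (i, j) k).
  by apply: IHw; rewrite // /swap_index /=; case: eqP => // _; case: eqP.
rewrite /swap_index /=; case: tpermP => [/eqP|/eqP|/eqP ki /eqP kj].
- by rewrite nth_uniq // => /eqP->; rewrite eqxx.
- by rewrite nth_uniq // => /eqP->; rewrite eqxx; case: eqP => [->|].
- by move: ki kj; rewrite !nth_uniq // => /negbTE-> /negbTE->.
Qed.

Lemma tword_perm_notin w y : tword_on m w -> y \notin s -> tword_perm w y = y.
Proof.
elim: w => [|[i j] w IHw] /=; first by rewrite /tword_perm big_nil perm1.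
case/andP=> /andP[im jm] wm ys; rewrite /tword_perm big_cons permM -/(tword_perm w).
by rewrite tpermD ?IHw //; apply: contraNneq ys => <-; rewrite mem_nth.
Qed.

Lemma tword_permP w1 w2 : tword_on m w1 -> tword_on m w2 ->
  reflect (tword_perm w1 = tword_perm w2) (tword_eq m w1 w2).
Proof.
move=> w1m w2m; apply: (iffP allP) => [eqw | eqp k].
  apply/permP => y; have [ys | ys] := boolP (y \in s); last first.
    by rewrite !tword_perm_notin.
  have km : index y s < m by rewrite index_mem.
  by rewrite -(nth_index x0 ys) !tword_perm_lab // (eqP (eqw _ _)) // mem_iota.
rewrite mem_iota add0n => km; have := congr1 (fun p : {perm T} => p (lab k)) eqp.
by rewrite /= !tword_perm_lab // => /eqP; rewrite nth_uniq ?tword_eval_on.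
Qed.

Lemma odd_tword_perm w : tword_on m w -> all (fun ij => ij.1 != ij.2) w ->
  odd_perm (tword_perm w) = odd (size w).
Proof.
elim: w => [|[i j] w IHw] /=; first by rewrite /tword_perm big_nil odd_perm1.
case/andP=> /andP[im jm] wm /andP[ij w_ne]; rewrite /tword_perm big_cons.
by rewrite odd_permM -/(tword_perm w) IHw // odd_tperm nth_uniq // ij.
Qed.

Lemma tword_permJ (phi : {perm T}) phil w :
    all (fun ij => phi (lab ij.1) == lab ij.2) phil ->
    all (fun ij => (ij.1 \in unzip1 phil) && (ij.2 \in unzip1 phil)) w ->
  tword_perm w ^ phi = tword_perm (relabel_tword phil w).
Proof.
move=> /allP phiE.
have relabelE i : i \in unzip1 phil -> phi (lab i) = lab (relabel phil i).
  elim: phil phiE => [|[j k] phil IHphil] //= phiE.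
  rewrite inE; case: eqP => [-> _ | _ /= iphil]; first exact/eqP/(phiE (j, k))/mem_head.
  by apply: IHphil => // ij ijphil; apply: phiE; rewrite inE ijphil orbT.
elim: w => [|ij w IHw] /=; first by rewrite /tword_perm !big_nil conj1g.
case/andP=> /andP[i1 i2] wphil; rewrite /tword_perm !big_cons -!/(tword_perm _).
by rewrite conjMg IHw // tpermJ !relabelE.
Qed.

Lemma tword_on_letters wu wv l :
  tword_on m wu -> tword_on m wv -> tword_on m (letters_tword wu wv l).
Proof.
move=> wum wvm; elim: l => [|c l IHl] //=; rewrite tword_on_cat IHl andbT.
by case: c => [|[|[|[|c]]]] /=; rewrite ?tword_on_rev ?nth_nil.
Qed.

Lemma mem_letters_tword wu wv l : all (fun c => c < 4) l ->
  tword_perm (letters_tword wu wv l) \in <<[set tword_perm wu; tword_perm wv]>>.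
Proof.
set K := <<_>>; have Ku : tword_perm wu \in K by rewrite mem_gen // !inE eqxx.
have Kv : tword_perm wv \in K by rewrite mem_gen // !inE eqxx orbT.
elim: l => [|c l IHl] /=; first by rewrite /tword_perm big_nil group1.
case/andP=> c4 l4; rewrite tword_perm_cat groupM ?IHl //.
by case: c c4 => [|[|[|[|c]]]] //= _; rewrite -?tword_permV ?groupV ?cats0.
Qed.

Lemma perfect_certificate_not_solvable wu wv A1 B1 A2 B2 :
    perfect_certificate m wu wv A1 B1 A2 B2 ->
  ~~ solvable <<[set tword_perm wu; tword_perm wv]>>.
Proof.
case/and5P=> wum wvm; rewrite !all_cat => /and4P[A1_4 B1_4 A2_4 B2_4] ntu /andP[Eu Ev].
have wordm := tword_on_letters _ wum wvm.
have cwordm l1 l2 :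
    tword_on m (comm_tword (letters_tword wu wv l1) (letters_tword wu wv l2)).
  by rewrite /comm_tword !tword_on_cat !tword_on_rev !wordm.
apply: (@gen_commutators_not_solvable _ _ _
  (tword_perm (letters_tword wu wv A1)) (tword_perm (letters_tword wu wv B1))
  (tword_perm (letters_tword wu wv A2)) (tword_perm (letters_tword wu wv B2))).
- apply: contra ntu => /eqP u1; apply/tword_permP => //.
  by rewrite u1 /tword_perm big_nil.
- by move=> x; rewrite !inE => /or4P[]/eqP->; apply: mem_letters_tword.
- by rewrite tword_permR; apply/tword_permP.
- by rewrite tword_permR; apply/tword_permP.
Qed.

Lemma kgood_of_witness (phi : {perm T}) phil wx1 wx2 A1 B1 A2 B2 :
    all (fun ij => phi (lab ij.1) == lab ij.2) phil ->
    witness m phil wx1 wx2 A1 B1 A2 B2 ->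
  kgood 'Alt_T phi^-1 2.
Proof.
move=> phiE /and3P[wx1E wx2E cert].
have commE wx : even_tword_on m phil wx ->
    tword_perm wx \in 'Alt_T /\
    pcomm phi^-1 (tword_perm wx) = tword_perm (commutator_tword phil wx).
  case/and4P=> wxm even_wx ne_wx wx_phil; split; first by rewrite Alt_even odd_tword_perm.
  rewrite tword_perm_cat -tword_permV -(tword_permJ phiE) //.
  by rewrite /pcomm invgK /conjg !mulgA.
have [[Ax1 E1] [Ax2 E2]] := (commE _ wx1E, commE _ wx2E).
by apply: kgood2 Ax1 Ax2 _; rewrite E1 E2 (perfect_certificate_not_solvable cert).
Qed.

End TranspositionWords.

Section SmallConfigurations.
Variables (T : finType) (phi : {perm T}).
Local Open Scope nat_scope.

(* x1 = (p0 p1 p2) and x2 = x1^-1: the two commutators generate the alternating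
   group of the five points. *)
Lemma kgood_five_points (p0 p1 q1 p2 q2 : T) :
    uniq [:: p0; p1; q1; p2; q2] -> phi p0 = p0 \/ phi p0 = p1 ->
    phi p1 = q1 -> phi p2 = q2 ->
  kgood 'Alt_T phi^-1 2.
Proof.
move=> U phi_p0 E1 E2.
have [i i_lt2 E0] : exists2 i, i < 2 & phi p0 = nth p0 [:: p0; p1; q1; p2; q2] i.
  by case: phi_p0 => ->; [exists 0 | exists 1].
apply: (@kgood_of_witness _ p0 _ U phi [:: (0, i); (1, 2); (3, 4)]
  [:: (0, 1); (0, 3)] [:: (0, 1); (1, 3)] [:: 3] [:: 0; 3] [:: 2] [:: 1; 2]).
  by rewrite /= E0 E1 E2 !eqxx.
by case: i i_lt2 {E0} => [|[|]] // _; vm_compute.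
Qed.

Lemma kgood_three_cycle (a b c e h : T) :
    uniq [:: a; b; c; e; h] -> phi a = b -> phi b = c -> phi c = a ->
    phi e = e -> phi h = h ->
  kgood 'Alt_T phi^-1 2.
Proof.
move=> U Ea Eb Ec Ee Eh.
apply: (@kgood_of_witness _ a _ U phi [:: (0, 1); (1, 2); (2, 0); (3, 3); (4, 4)]
  [:: (0, 3); (1, 4)] [:: (0, 4); (2, 3)] [:: 1] [:: 0; 1] [:: 0] [:: 1; 0]).
  by rewrite /= Ea Eb Ec Ee Eh !eqxx.
by vm_compute.
Qed.

Lemma kgood_eight_points (a b d e h k p q : T) :
    uniq [:: a; b; d; e; h; k; p; q] ->
    phi a = b -> phi d = e -> phi e = d -> phi h = k -> phi p = q ->
  kgood 'Alt_T phi^-1 2.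
Proof.
move=> U Ea Ed Ee Eh Ep.
apply: (@kgood_of_witness _ a _ U phi [:: (0, 1); (2, 3); (3, 2); (4, 5); (6, 7)]
  [:: (0, 2); (0, 4)] [:: (0, 3); (0, 6)]
  [:: 1; 0] [:: 3; 0; 3; 2; 1] [:: 0; 1] [:: 2; 1; 2; 3; 0]).
  by rewrite /= Ea Ed Ee Eh Ep !eqxx.
by vm_compute.
Qed.
End SmallConfigurations.

Lemma exists_notin (T : finType) (s : seq T) : size s < #|T| -> exists x, x \notin s.
Proof.
case: (pickP [predC s]) => [x sx _ | s_full]; first by exists x.
rewrite ltnNge (leq_trans _ (card_size s)) //; apply/subset_leq_card/subsetP => x _.
exact/negbFE/s_full.
Qed.

Lemma perm_images_neq (T : finType) (s : {perm T}) (x x' y y' : T) :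
  s x = y -> s x' = y' -> x != x' -> y != y'.
Proof. by move=> <- <-; rewrite (inj_eq perm_inj). Qed.

Lemma odd_perm_swaps (T : finType) (l : seq (T * T)) (phi : {perm T}) :
    uniq (flatten [seq [:: x.1; x.2] | x <- l]) ->
    (forall x, x \in l -> phi x.1 = x.2 /\ phi x.2 = x.1) ->
    (forall z, z \notin flatten [seq [:: x.1; x.2] | x <- l] -> phi z = z) ->
  odd_perm phi = odd (size l).
Proof.
elim: l phi => [|[x y] l IHl] phi /= Ul swap_l fix_l.
  by rewrite (_ : phi = 1) ?odd_perm1 //; apply/permP => z; rewrite perm1 fix_l.
set S := flatten _ in Ul swap_l fix_l IHl *.
move: Ul; rewrite !inE negb_or => /and3P[/andP[xy xS] yS US].
have [Ex Ey] := swap_l _ (mem_head _ _).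
have S_l z : z \in S -> z != x /\ z != y.
  by move=> zS; split; apply: contraTneq zS => ->.
have S_flatten u : u \in l -> u.1 \in S /\ u.2 \in S.
  move=> ul; split; apply/flattenP; exists [:: u.1; u.2];
    by rewrite ?map_f ?mem_head // !inE eqxx orbT.
rewrite -(mulgK (tperm x y) phi) odd_permM tpermV odd_tperm xy.
rewrite (IHl (phi * tperm x y)) ?addbT //.
- move=> u ul; have [u1S u2S] := S_flatten u ul.
  have [E1 E2] : phi u.1 = u.2 /\ phi u.2 = u.1 by apply: swap_l; rewrite inE ul orbT.
  have [[u1x u1y] [u2x u2y]] := (S_l _ u1S, S_l _ u2S).
  by rewrite !permM E1 E2 !tpermD // eq_sym.
- move=> z zS; rewrite permM.
  have [-> | zx] := eqVneq z x; first by rewrite Ex tpermR.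
  have [-> | zy] := eqVneq z y; first by rewrite Ey tpermL.
  by rewrite fix_l ?tpermD // 1?eq_sym // !inE negb_or zx negb_or zy.
Qed.

Lemma exists_moved_off_swaps (T : finType) (l : seq (T * T)) (phi : {perm T}) :
    uniq (flatten [seq [:: x.1; x.2] | x <- l]) ->
    (forall x, x \in l -> phi x.1 = x.2 /\ phi x.2 = x.1) ->
    odd (size l) -> ~~ odd_perm phi ->
  exists2 z, z \notin flatten [seq [:: x.1; x.2] | x <- l] & phi z != z.
Proof.
move=> Ul swap_l odd_l even_phi; set S := flatten _.
case: (pickP [pred z | (z \notin S) && (phi z != z)]) => [z /andP[zS zz] | fix_S].
  by exists z.
move: even_phi; rewrite (odd_perm_swaps Ul swap_l) ?odd_l // => z zS.
by apply/eqP; move: (fix_S z); rewrite /= zS => /negbFE.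
Qed.

Ltac distinct :=
  rewrite /= !inE ?negb_or; repeat (apply/andP; split); by rewrite // eq_sym.

Section Orbits.
Variables (T : finType) (phi : {perm T}).
Hypothesis T_ge5 : 4 < #|T|.

Lemma kgood_long_orbit a : phi (phi a) != a -> kgood 'Alt_T phi^-1 2.
Proof.
move Eb: (phi a) => b; move Ec: (phi b) => c; move Ed: (phi c) => d => ca.
have ba : b != a by apply: contraNneq ca => ba; rewrite -Ec ba -{2}ba Eb.
have cb : c != b := perm_images_neq Ec Eb ba.
have [e] := exists_notin (s := [:: a; b; c; d]) T_ge5.
rewrite !inE !negb_or => /and4P[ea eb ec ed]; move Ef: (phi e) => f.
have fb : f != b := perm_images_neq Ef Eb ea.
have fc : f != c := perm_images_neq Ef Ec eb.
have [f_ea | /norP[fe fa]] := boolP ((f == e) || (f == a)); last first.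
  by apply: (@kgood_five_points _ _ a b c e f) => //; [distinct | right].
have [da | da] := eqVneq d a; last first.
  have db : d != b := perm_images_neq Ed Eb ca.
  have dc : d != c := perm_images_neq Ed Ec cb.
  apply: (@kgood_five_points _ _ e a b c d) => //; first distinct.
  by rewrite Ef; case/orP: f_ea => /eqP; [left | right].
have fe : f = e.
  case/orP: f_ea => /eqP // fa.
  by have := perm_images_neq Ef Ed ec; rewrite fa da eqxx.
have [h] := exists_notin (s := [:: a; b; c; e]) T_ge5.
rewrite !inE !negb_or => /and4P[ha hb hc he]; move Ek: (phi h) => k.
have [kh | kh] := eqVneq k h.
  apply: (@kgood_three_cycle _ _ a b c e h) => //; first distinct.
  - by rewrite Ed.
  - by rewrite Ef.
  - by rewrite Ek.
have ka : k != a by rewrite -da; apply: perm_images_neq Ek Ed hc.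
have kb : k != b := perm_images_neq Ek Eb ha.
have kc : k != c := perm_images_neq Ek Ec hb.
by apply: (@kgood_five_points _ _ a b c h k) => //; [distinct | right].
Qed.

Lemma kgood_swaps a : ~~ odd_perm phi -> (forall z, phi (phi z) = z) -> phi a != a ->
  kgood 'Alt_T phi^-1 2.
Proof.
move=> even_phi invol; move Eb: (phi a) => b ba.
have Eba : phi b = a by rewrite -Eb invol.
have [|x|//|d] := exists_moved_off_swaps (l := [:: (a, b)]) _ _ _ even_phi.
- by distinct.
- by rewrite inE => /eqP->.
rewrite !inE negb_or => /andP[da db]; move Ee: (phi d) => e ed.
have Ede : phi e = d by rewrite -Ee invol.
have ea : e != a := perm_images_neq Ee Eba db.
have eb : e != b := perm_images_neq Ee Eb da.
case: (pickP [pred h | (h \notin [:: a; b; d; e]) && (phi h == h)]) => [h | no_fixed].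
  rewrite /= !inE !negb_or => /andP[/and4P[ha hb hd he] /eqP Eh].
  by apply: (@kgood_five_points _ _ h a b d e) => //; [distinct | left].
have [h hS] := exists_notin (s := [:: a; b; d; e]) T_ge5; move Ek: (phi h) => k.
have kh : k != h by have := no_fixed h; rewrite /= hS Ek => /negbT.
move: hS; rewrite !inE !negb_or => /and4P[ha hb hd he].
have Ekh : phi k = h by rewrite -Ek invol.
have ka : k != a := perm_images_neq Ek Eba hb.
have kb : k != b := perm_images_neq Ek Eb ha.
have kd : k != d := perm_images_neq Ek Ede he.
have ke : k != e := perm_images_neq Ek Ee hd.
(* Evenness is needed here: for #|T| = 6, phi could be (a b)(d e)(h k). *)
have [|x|//|p] :=
  exists_moved_off_swaps (l := [:: (a, b); (d, e); (h, k)]) _ _ _ even_phi.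
- by distinct.
- by rewrite !inE => /or3P[]/eqP->.
rewrite !inE !negb_or => /and5P[pa pb pd pe /andP[ph pk]]; move Eq: (phi p) => q qp.
have qa : q != a := perm_images_neq Eq Eba pb.
have qb : q != b := perm_images_neq Eq Eb pa.
have qd : q != d := perm_images_neq Eq Ede pe.
have qe : q != e := perm_images_neq Eq Ee pd.
have qh : q != h := perm_images_neq Eq Ekh pk.
have qk : q != k := perm_images_neq Eq Ek ph.
by apply: (@kgood_eight_points _ _ a b d e h k p q) => //; distinct.
Qed.

End Orbits.

Lemma kgood_Alt (T : finType) (phi : {perm T}) :
  4 < #|T| -> phi \in 'Alt_T -> phi != 1 -> kgood 'Alt_T phi^-1 2.
Proof.
move=> T_ge5 Aphi ntphi.
have [a phi_a] : exists a, phi a != a.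
  apply/existsP; apply: contraR ntphi => /existsPn fix_all.
  by apply/eqP/permP => z; rewrite perm1; apply/eqP/negbNE.
case: (pickP [pred z | phi (phi z) != z]) => [z /= long_z | swaps].
  exact: kgood_long_orbit long_z.
apply: (kgood_swaps T_ge5 _ _ phi_a); first by rewrite -Alt_even.
by move=> z; apply/eqP/negbFE/swaps.
Qed.

Theorem proposition3p1 (n : nat) (hn : 5 <= n) :
  is_radical_degree ('Alt_('I_n))%g 2.
Proof.
have card_n : 4 < #|'I_n| by rewrite card_ord.
have simpleA := simple_Alt5 card_n.
have kappa2 g : g \in 'Alt_('I_n) -> g != 1 -> is_kappa_elt 'Alt_('I_n) g 2.
  move=> Ag ntg; split=> [|m /kgood_lt2 //].
  by rewrite -[g]invgK; apply: kgood_Alt; rewrite ?groupV ?invg_eq1.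
have [g Ag ntg] : exists2 g, g \in 'Alt_('I_n) & g != 1.
  by apply/trivgPn; case/simpleP: simpleA.
have R1 : solv_radical 'Alt_('I_n) = 1.
  have [kgood_g _] := kappa2 g Ag ntg.
  exact: solv_radical_simple simpleA (kgood_not_solvable Ag kgood_g).
split=> [h | ].
  by rewrite R1 in_setD in_set1 => /andP[nt_h Ah]; exists 2; first exact: kappa2.
by exists g; [rewrite R1 in_setD in_set1 ntg | exact: kappa2].
Qed.
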